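(* Let $q$ be a prime power, $F=\mathbb{F}_q$, $m\ge1$ with $\gcd(q,m)=1$, and $R=F[x]/\langle x^m-1\rangle$. Let $C\subseteq R^2$ be the quasi-cyclic code (R-submodule) generated by one element $(g_{11}(x),g_{12}(x))$, where $g_{11}(x)\mid x^m-1$ and $\deg g_{12}<m$. Let $g(x)=\gcd(g_{11}(x),g_{12}(x))$. Then $C$ is Euclidean LCD if and only if $$\gcd\left(\frac{x^m-1}{g(x)},\ g_{11}(x)\bar g_{11}(x)+g_{12}(x)\bar g_{12}(x)\right)=1.$$
   Context: Elements of $R$ are represented by polynomials of degree $<m$ and identified with their coefficient vectors in $F^m$; a quasi-cyclic code of length $2m$ and index 2 is an $R$-submodule of $R^2$. The Euclidean inner product of $(a_1,a_2),(b_1,b_2)\in R^2$ is the sum of the standard dot products of the coefficient vectors of $a_1,b_1$ and of $a_2,b_2$; $C$ is Euclidean LCD if $C\cap C^{\perp_e}=\{0\}$. For a polynomial $f$ of degree at most $m$, $\bar f(x)=x^m f(x^{-1})$. *)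

From HB Require Import structures.
From mathcomp Require Import all_boot all_order all_algebra all_field.
Set Implicit Arguments. Unset Strict Implicit. Unset Printing Implicit Defensive.
Import GRing.Theory.
Local Open Scope ring_scope.

(* R = F[x]/<x^m - 1>; elements represented by their reduced polynomial
   representative (degree < m), identified with coefficient vectors in F^m. *)
Definition xm1 (F : fieldType) (m : nat) : {poly F} := 'X^m - 1.

Definition redR (F : fieldType) (m : nat) (p : {poly F}) : {poly F} := p %% xm1 F m.

Definition qc_code1 (F : fieldType) (m : nat) (g1 g2 : {poly F})
  (c : {poly F} * {poly F}) : Prop :=
  exists a : {poly F}, c = (redR m (a * g1), redR m (a * g2)).

Definition eip (F : fieldType) (m : nat) (c d : {poly F} * {poly F}) : F :=
  \sum_(i < m) ((redR m c.1)`_i * (redR m d.1)`_i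
               + (redR m c.2)`_i * (redR m d.2)`_i).

Definition euclidean_LCD (F : fieldType) (m : nat)
  (C : {poly F} * {poly F} -> Prop) : Prop :=
  forall c, C c -> (forall d, C d -> eip m c d = 0) -> c = (0, 0).

(* reciprocal: \bar f(x) = x^m f(x^{-1}) for deg f <= m *)
Definition recip (F : fieldType) (m : nat) (f : {poly F}) : {poly F} :=
  \poly_(i < m.+1) f`_(m - i).

From HB Require Import structures.
From mathcomp Require Import all_boot all_order all_algebra all_field.
From mathcomp Require Import ring.
Set Implicit Arguments. Unset Strict Implicit. Unset Printing Implicit Defensive.
Import GRing.Theory.
Local Open Scope ring_scope.

(* Multiplication by p in R is adjoint, for the dot product of coefficient
   vectors, to multiplication by p(x^-1) = p(x^(m-1)).  Hence the inner
   product of the codewords a(g11, g12) and b(g11, g12) is the dot product of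
   b with a h, where h = g11 g11(x^-1) + g12 g12(x^-1) agrees with
   g11 bar(g11) + g12 bar(g12) modulo x^m - 1.  As the dot product is
   nondegenerate, a(g11, g12) lies in the hull exactly when x^m - 1 divides
   a h, and it vanishes exactly when M = (x^m - 1)/g divides a.  So C is LCD iff
   M divides every a with x^m - 1 | a h; since x^m - 1 is separable and g | h,
   this holds iff gcd(M, h) = 1. *)

Lemma xm1_dvdp_XnB (F : fieldType) (m i j : nat) :
  i = j %[mod m] -> xm1 F m %| 'X^i - 'X^j.
Proof.
wlog le_ij : i j / (i <= j)%N.
  move=> W e; case: (leqP i j) => [|/ltnW] h; first exact: W.
  by rewrite -opprB dvdpNr W.
move=> /eqP; rewrite eq_sym eqn_mod_dvd // => /dvdnP [k Ek].
rewrite -(subnKC le_ij) Ek exprD -opprB dvdpNr -{2}['X^i]mulr1 -mulrBr.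
by rewrite dvdp_mull // mulnC exprM -(expr1n _ k) subrXX dvdp_mulr.
Qed.

Lemma sum_ord_rotr (V : zmodType) (n : nat) (f : nat -> V) :
  \sum_(i < n) (if (i : nat) == 0%N then f n.-1 else f i.-1) = \sum_(i < n) f i.
Proof.
case: n => [|n]; first by rewrite !big_ord0.
by rewrite big_ord_recl big_ord_recr addrC.
Qed.

Section CyclicDot.
Variables (F : fieldType) (m : nat).
Hypothesis m_gt0 : (0 < m)%N.
Local Notation N := (xm1 F m).
Implicit Types u v w p f : {poly F}.

Definition cdot u v : F := \sum_(i < m) (redR m u)`_i * (redR m v)`_i.

(* Represents p(x^-1) in R, as x^(m-1) is the inverse of x there. *)
Definition cconj p : {poly F} := p \Po 'X^(m.-1).

Lemma size_xm1 : size N = m.+1.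
Proof. by rewrite /xm1 -polyC1 size_XnsubC. Qed.

Lemma xm1_neq0 : N != 0.
Proof. by rewrite -size_poly_eq0 size_xm1. Qed.

Lemma size_redR u : (size (redR m u) <= m)%N.
Proof. by rewrite -ltnS -size_xm1 ltn_modp xm1_neq0. Qed.

Lemma cdot_redl u v : cdot (redR m u) v = cdot u v.
Proof. by rewrite /cdot /redR modp_id. Qed.

Lemma cdot_redr u v : cdot u (redR m v) = cdot u v.
Proof. by rewrite /cdot /redR modp_id. Qed.

Lemma cdotC u v : cdot u v = cdot v u.
Proof. by apply: eq_bigr => i _; rewrite mulrC. Qed.

Lemma cdotDl u u' v : cdot (u + u') v = cdot u v + cdot u' v.
Proof.
by rewrite /cdot -big_split; apply: eq_bigr => i _; rewrite /redR modpD coefD mulrDl.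
Qed.

Lemma cdotZl c u v : cdot (c *: u) v = c * cdot u v.
Proof.
by rewrite /cdot mulr_sumr; apply: eq_bigr => i _; rewrite /redR modpZl coefZ mulrA.
Qed.

Lemma cdotDr u v v' : cdot u (v + v') = cdot u v + cdot u v'.
Proof. by rewrite cdotC cdotDl !(cdotC u). Qed.

Lemma cdotZr c u v : cdot u (c *: v) = c * cdot u v.
Proof. by rewrite cdotC cdotZl cdotC. Qed.

Lemma cdot_dvdr u w : N %| w -> cdot u w = 0.
Proof.
by move=> /modp_eq0 w0; rewrite /cdot big1 // => i _; rewrite /redR w0 coef0 mulr0.
Qed.

Lemma cdotXn u j : (j < m)%N -> cdot u 'X^j = (redR m u)`_j.
Proof.
move=> lt_jm; rewrite /cdot {2}/redR modp_small ?size_polyXn ?size_xm1 //.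
rewrite (bigD1 (Ordinal lt_jm)) //= big1 ?coefXn ?eqxx ?mulr1 ?addr0 // => i ne_ij.
by have /negbTE ne_ij' : (i : nat) != j := ne_ij; rewrite coefXn ne_ij' mulr0.
Qed.

Lemma cdot_nondeg w : (forall u, cdot u w = 0) -> N %| w.
Proof.
move=> w_perp; apply/modp_eq0P/polyP => j; rewrite coef0.
have [lt_jm | le_mj] := ltnP j m; last exact/nth_default/(leq_trans (size_redR w)).
by rewrite -cdotXn // cdotC.
Qed.

Lemma coef_redR_mulX u i : (size u <= m)%N -> (i < m)%N ->
  (redR m ('X * u))`_i = if i == 0%N then u`_m.-1 else u`_i.-1.
Proof.
move=> size_u lt_im.
have -> : 'X * u = u`_m.-1 *: N + ('X * u - u`_m.-1 *: N) by rewrite addrC subrK.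
rewrite /redR -mul_polyC modp_addl_mul_small mul_polyC; last first.
  rewrite size_xm1 ltnS; apply/leq_sizeP => j le_mj.
  rewrite coefB coefXM coefZ coefB coefXn coef1 gtn_eqF ?(leq_trans m_gt0) //.
  have [-> | ne_jm] := eqVneq j m; first by rewrite subr0 mulr1 subrr.
  rewrite subr0 mulr0 subr0 (leq_sizeP _ _ size_u) // -ltnS prednK ?(leq_trans m_gt0) //.
  by rewrite ltn_neqAle eq_sym ne_jm.
rewrite coefB coefXM coefZ coefB coefXn coef1 (ltn_eqF lt_im).
by case: (i == 0%N); rewrite ?subrr ?mulr0 ?subr0 // sub0r sub0r mulrN1 opprK.
Qed.

Lemma cdot_mulX u v : cdot ('X * u) ('X * v) = cdot u v.
Proof.
rewrite /cdot {1 2}/redR -(modp_mul 'X u) -(modp_mul 'X v) -!/(redR m _).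
rewrite -(sum_ord_rotr m (fun i => (redR m u)`_i * (redR m v)`_i)).
by apply: eq_bigr => i _; rewrite !coef_redR_mulX ?size_redR //; case: eqP.
Qed.

Lemma redR_mulXn u : redR m ('X^m * u) = redR m u.
Proof.
apply/eqP; rewrite -subr_eq0 /redR -modpN -modpD -{2}(mul1r u) -mulrBl.
by apply/eqP/modp_eq0P; rewrite dvdp_mulr.
Qed.

Lemma cdot_mulXl u v : cdot ('X * u) v = cdot u ('X^(m.-1) * v).
Proof.
rewrite -cdot_redr -redR_mulXn cdot_redr -[in 'X^m](prednK m_gt0) exprS -mulrA.
exact: cdot_mulX.
Qed.

Lemma cdot_mull p u v : cdot (p * u) v = cdot u (cconj p * v).
Proof.
elim/poly_ind: p u v => [|p c IHp] u v.
  by rewrite /cconj comp_poly0 !mul0r cdotC !cdot_dvdr ?dvdp0.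
rewrite /cconj comp_poly_MXaddC -/(cconj p) !mulrDl !mul_polyC cdotDl cdotDr.
by rewrite cdotZl cdotZr -mulrA IHp cdot_mulXl mulrA [_ * 'X^_]mulrC.
Qed.

Lemma recip_cconj f : (size f <= m.+1)%N -> N %| recip m f - cconj f.
Proof.
move=> size_f.
have -> : recip m f = \sum_(i < m.+1) f`_i *: 'X^(m - i).
  rewrite /recip poly_def (reindex_inj rev_ord_inj) /=.
  by apply: eq_bigr => i _; rewrite subSS subKn // -ltnS.
have -> : cconj f = \sum_(i < m.+1) f`_i *: 'X^(m.-1) ^+ i.
  rewrite /cconj comp_polyE (big_ord_widen _ (fun i => f`_i *: 'X^(m.-1) ^+ i) size_f).
  rewrite big_mkcond /=; apply: eq_bigr => i _.
  by case: ltnP => // le_fi; rewrite nth_default // scale0r.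
rewrite -sumrB; apply: (big_ind (dvdp N)) => [||i _]; [exact: dvdp0 | exact: dvdp_add |].
rewrite -scalerBr -mul_polyC dvdp_mull // -exprM; apply: xm1_dvdp_XnB.
have le_im : (i <= m)%N by rewrite -ltnS.
by apply/eqP; rewrite -(eqn_modDr i) subnK // -mulSnr prednK // modnMr modnn.
Qed.

End CyclicDot.

Section QuasiCyclicCode.
Variables (F : fieldType) (m : nat) (g1 g2 : {poly F}).
Hypotheses (m_gt0 : (0 < m)%N)
  (size_g1 : (size g1 <= m.+1)%N) (size_g2 : (size g2 <= m.+1)%N).
Local Notation N := (xm1 F m).
Local Notation codeword a := (redR m (a * g1), redR m (a * g2)).
Local Notation hull_recip := (g1 * recip m g1 + g2 * recip m g2).
Local Notation hull := (g1 * cconj m g1 + g2 * cconj m g2).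

Lemma eip_codeword a b : eip m (codeword a) (codeword b) = cdot m b (a * hull).
Proof.
rewrite /eip big_split /= -!/(cdot _ _ _) !cdot_redl !cdot_redr.
rewrite (cdotC _ (a * g1)) (cdotC _ (a * g2)) ![b * _]mulrC !cdot_mull // -cdotDr.
by congr (cdot m b _); ring.
Qed.

Lemma dvdp_hull_recip a : (N %| a * hull_recip) = (N %| a * hull).
Proof.
rewrite -[a * hull_recip](subrK (a * hull)) dvdp_addr // -mulrBr dvdp_mull //.
have -> : hull_recip - hull
    = g1 * (recip m g1 - cconj m g1) + g2 * (recip m g2 - cconj m g2) by ring.
by rewrite dvdp_add // dvdp_mull // recip_cconj.
Qed.

Lemma euclidean_LCD_qc_code1P : euclidean_LCD m (qc_code1 m g1 g2) <->
  (forall a, N %| a * hull_recip -> (N %| a * g1) && (N %| a * g2)).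
Proof.
split=> [LCD a | ann_g c [a ->] c_perp].
  rewrite dvdp_hull_recip => N_ahull.
  have /pair_equal_spec[] : codeword a = (0, 0).
    apply: LCD => [|_ [b ->]]; first by exists a.
    by rewrite eip_codeword cdot_dvdr.
  by rewrite /redR => /modp_eq0P -> /modp_eq0P.
have /ann_g/andP[/modp_eq0P g1a /modp_eq0P g2a] : N %| a * hull_recip.
  rewrite dvdp_hull_recip; apply: (cdot_nondeg m_gt0) => b.
  by rewrite -eip_codeword; apply: c_perp; exists b.
by rewrite /redR g1a g2a.
Qed.

End QuasiCyclicCode.

Lemma dvdp_divp_gcdp (F : fieldType) (N g1 g2 a : {poly F}) :
  gcdp g1 g2 %| N -> gcdp g1 g2 != 0 ->
  (N %| a * g1) && (N %| a * g2) = (N %/ gcdp g1 g2 %| a).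
Proof.
move=> gN g_neq0; rewrite -(dvdp_mul2r _ a g_neq0) divpK //.
by rewrite (eqp_dvdr _ (mulp_gcdr g1 g2 a)) dvdp_gcd.
Qed.

Lemma separable_dvdp_cancelP (F : fieldType) (N g h : {poly F}) :
  separable_poly N -> g %| N -> g %| h ->
  (forall a, N %| a * h -> N %/ g %| a) <-> coprimep (N %/ g) h.
Proof.
move=> sepN gN gh; set M := N %/ g; have NE : M * g = N by rewrite divpK.
have M_neq0 : M != 0.
  apply: contraTneq sepN => M0; rewrite -NE M0 mul0r.
  by apply/negP => /separable_coprime/(_ (dvdp0 (0 * 0))); rewrite coprime0p eqp01.
split=> [cancel_h | coMh a N_ah]; last first.
  by rewrite -(Gauss_dvdpl _ coMh) (dvdp_trans _ N_ah) // -NE dvdp_mulr.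
set d := gcdp M h; have dM : d %| M := dvdp_gcdl M h.
have co_gd : coprimep g d.
  by apply: coprimep_dvdl dM _; apply: (separable_coprime sepN); rewrite mulrC NE.
have gd_h : g * d %| h by rewrite Gauss_dvdp // gh dvdp_gcdr.
set q := M %/ d; have Md : q * d = M by rewrite divpK.
have q_neq0 : q != 0 by apply: contra_neq M_neq0 => q0; rewrite -Md q0 mul0r.
have : M %| q by apply: cancel_h; rewrite -NE -Md -mulrA [d * g]mulrC dvdp_mul2l.
by rewrite -{1}Md -{2}[q]mulr1 dvdp_mul2l // dvdp1 coprimep_def.
Qed.

Lemma natf_neq0_coprime_card (F : finFieldType) (m : nat) :
  coprime #|F| m -> m%:R != 0 :> F.
Proof.
have [p p_pr pcharFp] := finPcharP F.
move: (card_pprimeChar pcharFp) (finNzRing_gt1 F); case: logn => [-> //|k ->].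
rewrite coprime_pexpl // prime_coprime // => _.
by apply: contra => /eqP m0; rewrite (dvdn_pcharf pcharFp) m0.
Qed.

Theorem theorem4p3 (F : finFieldType) (m : nat) (g11 g12 : {poly F}) :
  (0 < m)%N -> coprime #|F| m ->
  g11 %| xm1 F m -> (size g12 <= m)%N ->
  euclidean_LCD m (qc_code1 m g11 g12) <->
  coprimep (xm1 F m %/ gcdp g11 g12)
           (g11 * recip m g11 + g12 * recip m g12).
Proof.
move=> m_gt0 coFm g11_N size_g12.
have size_g11 : (size g11 <= m.+1)%N.
  by rewrite -(size_xm1 F m_gt0) dvdp_leq ?xm1_neq0.
have gN : gcdp g11 g12 %| xm1 F m := dvdp_trans (dvdp_gcdl _ _) g11_N.
have g_neq0 : gcdp g11 g12 != 0.
  by apply: contraTneq gN => ->; rewrite dvd0p xm1_neq0.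
have g_hull : gcdp g11 g12 %| g11 * recip m g11 + g12 * recip m g12.
  by rewrite dvdp_add // dvdp_mulr ?dvdp_gcdl ?dvdp_gcdr.
have sepN : separable_poly (xm1 F m).
  exact/separable_Xn_sub_1/natf_neq0_coprime_card.
apply: iff_trans (euclidean_LCD_qc_code1P m_gt0 size_g11 (leqW size_g12)) _.
apply: iff_trans (separable_dvdp_cancelP sepN gN g_hull).
by split=> ann a /ann; rewrite dvdp_divp_gcdp.
Qed.
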